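(* Let $G$ be a finitely generated group with an automorphism $f$ whose subgroup of fixed points is not finitely generated. Then for every integer $n\geq 1$, every $n$-configuration $c$ with $|c^{-1}(1)|\leq 1$ is realisable in $G^n$.
   Context: $G^n$ denotes the direct product of $n$ copies of $G$. Write $[n]=\{1,\dots,n\}$. An $n$-configuration is a map $c\colon \mathcal{P}([n])\setminus\{\emptyset\}\to\{0,1\}$. An $n$-configuration $c$ is realisable in a group $G$ if there exist subgroups $H_1,\dots,H_n\leq G$ such that for every non-empty subset $I\subseteq[n]$, the subgroup $\bigcap_{i\in I}H_i$ is finitely generated if and only if $c(I)=0$. *)

From mathcomp Require Import all_boot.
Set Implicit Arguments. Unset Strict Implicit. Unset Printing Implicit Defensive.

Record group := Group {
  carrier :> Type;
  gmul : carrier -> carrier -> carrier;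
  gone : carrier;
  ginv : carrier -> carrier;
  gmulA : forall x y z, gmul x (gmul y z) = gmul (gmul x y) z;
  gmul1x : forall x, gmul gone x = x;
  gmulx1 : forall x, gmul x gone = x;
  gmulVx : forall x, gmul (ginv x) x = gone;
  gmulxV : forall x, gmul x (ginv x) = gone
}.

Definition is_subgroup (G : group) (H : G -> Prop) : Prop :=
  H (gone G) /\ (forall x y, H x -> H y -> H (gmul x y)) /\
  (forall x, H x -> H (ginv x)).

Definition generated_by (G : group) (H : G -> Prop) (k : nat) (g : 'I_k -> G)
  : Prop :=
  (forall j, H (g j)) /\
  (forall x, H x -> forall K : G -> Prop, is_subgroup K ->
     (forall j, K (g j)) -> K x).

Definition fin_gen (G : group) (H : G -> Prop) : Prop :=
  exists (k : nat) (g : 'I_k -> G), generated_by H g.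

Definition fin_gen_group (G : group) : Prop := fin_gen (fun _ : G => True).

Definition is_automorphism (G : group) (f : G -> G) : Prop :=
  (forall x y, f (gmul x y) = gmul (f x) (f y)) /\ bijective f.

Definition fixed_points (G : group) (f : G -> G) : G -> Prop :=
  fun x => f x = x.

Section Power.
Variables (G : group) (n : nat).
Local Notation T := {ffun 'I_n -> G}.
Definition pmul (x y : T) : T := [ffun i => gmul (x i) (y i)].
Definition pone : T := [ffun _ => gone G].
Definition pinv (x : T) : T := [ffun i => ginv (x i)].
Lemma pmulA x y z : pmul x (pmul y z) = pmul (pmul x y) z.
Proof. by apply/ffunP=> i; rewrite !ffunE gmulA. Qed.
Lemma pmul1x x : pmul pone x = x.
Proof. by apply/ffunP=> i; rewrite !ffunE gmul1x. Qed.
Lemma pmulx1 x : pmul x pone = x.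
Proof. by apply/ffunP=> i; rewrite !ffunE gmulx1. Qed.
Lemma pmulVx x : pmul (pinv x) x = pone.
Proof. by apply/ffunP=> i; rewrite !ffunE gmulVx. Qed.
Lemma pmulxV x : pmul x (pinv x) = pone.
Proof. by apply/ffunP=> i; rewrite !ffunE gmulxV. Qed.
Definition power_group : group :=
  Group pmulA pmul1x pmulx1 pmulVx pmulxV.
End Power.

(* An n-configuration: a map from subsets of [n] = 'I_n to {0,1} = bool
   (true = 1); only its values on non-empty subsets are relevant. *)
Definition configuration (n : nat) := {set 'I_n} -> bool.

Definition realisable (G : group) (n : nat) (c : configuration n) : Prop :=
  exists H : 'I_n -> G -> Prop,
    (forall i, is_subgroup (H i)) /\
    (forall I : {set 'I_n}, I != set0 ->
       (fin_gen (fun x => forall i, i \in I -> H i x) <-> c I = false)).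

Definition ones_count (n : nat) (c : configuration n) : nat :=
  #|[set I : {set 'I_n} | (I != set0) && c I]|.

From mathcomp Require Import all_boot.
Set Implicit Arguments. Unset Strict Implicit. Unset Printing Implicit Defensive.

(* Let I0 be the only set with c(I0) = 1, and k = |I0|. The subgroups H_i,
   i in I0, are the links of a cycle through k coordinates of G^n, each link
   equating two consecutive coordinates, the closing link being twisted by f;
   the other H_i are trivial. All k links together cut out a subgroup projecting
   onto Fix(f), hence not finitely generated. If some link is missing, applying
   f^-1 to the coordinates before the gap untwists the remaining links, so the
   intersection is the image of a subgroup of G^n defined by equalities between
   coordinates; such a subgroup is a copy of a power of G, hence finitely
   generated. If c never takes the value 1, all H_i = G^n will do. *)

Definition group_hom (A B : group) (phi : A -> B) : Prop :=
  forall x y, phi (gmul x y) = gmul (phi x) (phi y).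

Lemma gmulI (G : group) (x y z : G) : gmul x y = gmul x z -> y = z.
Proof.
by move=> /(congr1 (gmul (ginv x))); rewrite !gmulA gmulVx !gmul1x.
Qed.

Section Subgroups.
Variable G : group.

Lemma subgroup1 : is_subgroup (fun x : G => x = gone G).
Proof.
split=> //; split=> [x y -> ->|x ->]; first exact: gmul1x.
by rewrite -[ginv _]gmulx1 gmulVx.
Qed.

Lemma subgroup_bigcap (I : Type) (P : I -> Prop) (K : I -> G -> Prop) :
  (forall i, is_subgroup (K i)) -> is_subgroup (fun x => forall i, P i -> K i x).
Proof.
move=> K_sub; split=> [i _|]; first by case: (K_sub i).
split=> [x y Kx Ky i Pi|x Kx i Pi]; have [_ [KM KV]] := K_sub i.
  by apply: KM; [apply: Kx | apply: Ky].
by apply: KV; apply: Kx.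
Qed.

Lemma eq_fin_gen (P Q : G -> Prop) :
  (forall x, P x <-> Q x) -> fin_gen P <-> fin_gen Q.
Proof.
move=> PQ; split=> [[l [a [Pa genP]]]|[l [a [Qa genQ]]]]; exists l, a.
  by split=> [j|x /PQ]; [apply/PQ | apply: genP].
by split=> [j|x /PQ]; [apply/PQ | apply: genQ].
Qed.

Lemma fin_gen_sub1 (P : G -> Prop) : (forall x, P x -> x = gone G) -> fin_gen P.
Proof.
move=> P1; exists 0, (fun _ => gone G); split=> [[]//|x /P1 -> K [K1 _] _].
exact: K1.
Qed.

End Subgroups.

Section Homomorphisms.
Variables (A B : group) (phi : A -> B).
Hypothesis phi_hom : group_hom phi.

Lemma hom1 : phi (gone A) = gone B.
Proof. by apply: (@gmulI _ (phi (gone A))); rewrite -phi_hom !gmulx1. Qed.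

Lemma homV x : phi (ginv x) = ginv (phi x).
Proof. by apply: (@gmulI _ (phi x)); rewrite -phi_hom !gmulxV hom1. Qed.

Lemma subgroup_preim (K : B -> Prop) :
  is_subgroup K -> is_subgroup (fun a => K (phi a)).
Proof.
move=> [K1 [KM KV]]; split; first by rewrite hom1.
split=> [x y Kx Ky|x Kx]; first by rewrite phi_hom; apply: KM.
by rewrite homV; apply: KV.
Qed.

Lemma fin_gen_image (P : A -> Prop) :
  fin_gen P -> fin_gen (fun b => exists2 a, P a & phi a = b).
Proof.
move=> [l [a [Pa genP]]]; exists l, (fun j => phi (a j)); split.
  by move=> j; exists (a j).
move=> _ [x Px <-] K K_sub Ka.
exact: (genP x Px _ (subgroup_preim K_sub)).
Qed.

End Homomorphisms.

Section Power.
Variables (G : group) (n : nat).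
Local Notation Gn := (power_group G n).

Definition embed (i : 'I_n) (a : G) : Gn := [ffun s => if s == i then a else gone G].

Lemma embed_hom i : group_hom (embed i).
Proof.
move=> a b; apply/ffunP=> s; rewrite /= /pmul !ffunE.
by case: (s == i); rewrite ?gmulx1.
Qed.

Lemma fin_gen_power : fin_gen_group G -> fin_gen_group Gn.
Proof.
move=> [l [a [_ gen_a]]].
exists #|{: 'I_n * 'I_l}|, (fun q => embed (enum_val q).1 (a (enum_val q).2)).
split=> // x _ K K_sub K_gen.
have K_embed i b : K (embed i b).
  apply: (gen_a b I _ (subgroup_preim (embed_hom i) K_sub)) => j.
  by have := K_gen (enum_rank (i, j)); rewrite enum_rankK.
have [K1 [KM _]] := K_sub.
pose prefix (s : nat) : Gn := [ffun i : 'I_n => if i < s then x i else gone G].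
have K_prefix s : K (prefix s).
  elim: s => [|s IH].
    by have -> : prefix 0 = gone Gn by apply/ffunP=> i; rewrite !ffunE.
  have [s_lt_n|n_le_s] := ltnP s n; last first.
    have -> // : prefix s.+1 = prefix s.
    by apply/ffunP=> i; rewrite !ffunE !(leq_trans (ltn_ord i)) // leqW.
  have -> : prefix s.+1 =
      gmul (prefix s) (embed (Ordinal s_lt_n) (x (Ordinal s_lt_n))).
    apply/ffunP=> i; rewrite /= /pmul !ffunE -val_eqE /= ltnS.
    case: ltngtP => [||i_eq_s]; rewrite ?gmulx1 ?gmul1x //.
    by congr (x _); apply: val_inj; exact: i_eq_s.
  exact: KM.
have -> : x = prefix n by apply/ffunP=> i; rewrite ffunE ltn_ord.
exact: K_prefix.
Qed.

End Power.

Lemma connect_invariant (T : finType) (U : Type) (e : rel T) (h : T -> U) :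
  (forall a b, e a b -> h a = h b) -> forall a b, connect e a b -> h a = h b.
Proof.
move=> he a b /connectP [q eq_path ->] {b}.
elim: q a eq_path => //= b q IH a /andP [eab eq_path].
by rewrite (he _ _ eab); apply: IH.
Qed.

Lemma fin_gen_equalizer (G : group) (n : nat) (e : rel 'I_n) :
  fin_gen_group G ->
  fin_gen (fun y : power_group G n => forall a b, e a b -> y a = y b).
Proof.
move=> G_fg.
pose es := [rel a b | e a b || e b a].
have es_sym : connect_sym es by apply: sym_connect_sym => a b /=; rewrite orbC.
pose spread (y : power_group G n) : power_group G n := [ffun s => y (root es s)].
have spread_hom : group_hom spread.
  by move=> x y; apply/ffunP=> s; rewrite /= /pmul !ffunE.
move: (fin_gen_image spread_hom (fin_gen_power n G_fg)); apply: (eq_fin_gen _).1 => y.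
split=> [[z _ <-] a b eab | y_eq].
  rewrite !ffunE; congr (z _); apply/eqP.
  by rewrite (root_connect es_sym) connect1 //= eab.
exists y => //; apply/ffunP=> s; rewrite ffunE; apply/esym.
apply: (connect_invariant _ (connect_root es s)) => a b /orP [eab|eba].
  exact: y_eq.
by rewrite (y_eq _ _ eba).
Qed.

Section Twist.
Variables (G : group) (n : nat) (T : {set 'I_n}).

Definition twist (h : G -> G) (y : power_group G n) : power_group G n :=
  [ffun s => if s \in T then h (y s) else y s].

Lemma twist_hom h : group_hom h -> group_hom (twist h).
Proof.
move=> h_hom x y; apply/ffunP=> s; rewrite /= /pmul !ffunE.
by case: (s \in T); rewrite ?h_hom.
Qed.

Lemma twistK h h' : cancel h h' -> cancel (twist h) (twist h').
Proof.
by move=> hK y; apply/ffunP=> s; rewrite !ffunE; case: (s \in T); rewrite ?hK.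
Qed.

Lemma twist_eq_same h (y : power_group G n) a b :
  injective h -> (a \in T) = (b \in T) -> y a = y b <-> twist h y a = twist h y b.
Proof.
move=> h_inj Tab; rewrite !ffunE Tab.
by case: (b \in T); split=> [->|] //; apply: h_inj.
Qed.

Lemma twist_eq_cross f g (y : power_group G n) a b :
  cancel f g -> cancel g f -> a \in T -> b \notin T ->
  y a = f (y b) <-> twist g y a = twist g y b.
Proof.
move=> fK gK Ta Tb; rewrite !ffunE Ta (negbTE Tb).
by split=> [->|<-]; rewrite ?fK ?gK.
Qed.

End Twist.

Section Cycle.
Variables (G : group) (f g : G -> G).
Hypotheses (f_hom : group_hom f) (fK : cancel f g) (gK : cancel g f).
Variables (n k : nat) (p : 'I_k -> 'I_n).

Definition cycle_constraint (t : 'I_k) (y : power_group G n) : Prop :=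
  y (p (ordS t)) = if t.+1 < k then y (p t) else f (y (p t)).

Definition cycle_sub (S : pred 'I_k) (y : power_group G n) : Prop :=
  forall t, S t -> cycle_constraint t y.

Lemma cycle_sub_subgroup S : is_subgroup (cycle_sub S).
Proof.
apply: subgroup_bigcap => t; rewrite /cycle_constraint.
split; first by rewrite /= /pone !ffunE (hom1 f_hom); case: ifP.
split=> [x y|x]; rewrite /= /pmul /pinv !ffunE; case: ifP => _.
- by move=> -> ->.
- by move=> -> ->; rewrite f_hom.
- by move=> ->.
- by move=> ->; rewrite (homV f_hom).
Qed.

Section AllConstraints.
Hypothesis k_gt0 : 0 < k.
Let t0 : 'I_k := Ordinal k_gt0.

Lemma cycle_constraints_const y : (forall t, cycle_constraint t y) ->
  forall s (s_lt_k : s < k), y (p (Ordinal s_lt_k)) = y (p t0).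
Proof.
move=> y_cyc; elim=> [|s IH] s_lt_k; first by congr (y (p _)); apply: val_inj.
have s_lt_k' := ltnW s_lt_k.
have -> : Ordinal s_lt_k = ordS (Ordinal s_lt_k').
  by apply: val_inj; rewrite /= modn_small.
by rewrite y_cyc /= s_lt_k IH.
Qed.

Lemma cycle_constraints_fixed y : (forall t, cycle_constraint t y) ->
  fixed_points f (y (p t0)).
Proof.
move=> y_cyc; have last_lt_k : k.-1 < k by rewrite prednK.
have wrap : ordS (Ordinal last_lt_k) = t0 by apply: val_inj; rewrite /= prednK // modnn.
have := y_cyc (Ordinal last_lt_k).
rewrite /cycle_constraint wrap /= prednK // ltnn => wrap_eq.
by rewrite /fixed_points {2}wrap_eq (cycle_constraints_const y_cyc last_lt_k).
Qed.

Lemma fin_gen_cycle_fixed_points :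
  fin_gen (fun y => forall t, cycle_constraint t y) -> fin_gen (fixed_points f).
Proof.
have proj_hom : group_hom (fun y : power_group G n => y (p t0)).
  by move=> x y; rewrite /= /pmul ffunE.
move/(fin_gen_image proj_hom); apply: (eq_fin_gen _).1 => x; split.
  by move=> [y y_cyc <-]; apply: cycle_constraints_fixed.
move=> fx; exists [ffun _ => x]; last by rewrite ffunE.
by move=> t; rewrite /cycle_constraint !ffunE fx; case: ifP.
Qed.

End AllConstraints.

Section CutConstraint.
Hypothesis p_inj : injective p.
Variable m : 'I_k.
Let cut := p @: [set s : 'I_k | s <= m].

Lemma cycle_constraint_twist t y : t != m ->
  cycle_constraint t y <-> twist cut g y (p (ordS t)) = twist cut g y (p t).
Proof.
move=> t_neq_m; have mem_cut s : (p s \in cut) = (s <= m) by rewrite mem_imset // inE.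
rewrite /cycle_constraint; case: ltnP => [t1_lt_k|k_le_t1].
  apply: twist_eq_same; first exact: can_inj gK.
  by rewrite !mem_cut /= modn_small // ltn_neqAle t_neq_m.
have t1_eq_k : t.+1 = k by apply/eqP; rewrite eqn_leq ltn_ord.
apply: twist_eq_cross => //; rewrite !mem_cut.
  by rewrite /= t1_eq_k modnn.
by rewrite -ltnNge ltn_neqAle eq_sym t_neq_m -ltnS t1_eq_k /=.
Qed.

Lemma fin_gen_cycle_cut S : fin_gen_group G -> ~~ S m -> fin_gen (cycle_sub S).
Proof.
move=> G_fg Sm.
have S_neq_m t : S t -> t != m by apply: contraTneq => ->.
pose e := [rel a b | [exists t, [&& S t, a == p (ordS t) & b == p t]]].
move: (fin_gen_image (twist_hom cut f_hom) (fin_gen_equalizer e G_fg)).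
apply: (eq_fin_gen _).1 => x; split.
  move=> [y y_eq <-] t St; apply/(cycle_constraint_twist _ (S_neq_m t St)).
  by rewrite twistK //; apply: y_eq; apply/existsP; exists t; rewrite St !eqxx.
move=> x_cyc; exists (twist cut g x); last exact: twistK.
move=> a b /existsP [t /and3P [St /eqP -> /eqP ->]].
by apply/cycle_constraint_twist; [apply: S_neq_m | apply: x_cyc].
Qed.

End CutConstraint.

Lemma fin_gen_cycle_sub S : fin_gen_group G -> ~ fin_gen (fixed_points f) ->
  0 < k -> injective p -> fin_gen (cycle_sub S) <-> [exists m, ~~ S m].
Proof.
move=> G_fg Fix_nfg k_gt0 p_inj; split=> [S_fg|/existsP [m Sm]]; last first.
  exact: (fin_gen_cycle_cut p_inj G_fg Sm).
apply: contraT => /existsPn S_all; case: Fix_nfg.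
apply: (fin_gen_cycle_fixed_points k_gt0); apply: (eq_fin_gen _).1 S_fg => y.
by split=> y_cyc t => [|_]; apply: y_cyc; apply/negPn/S_all.
Qed.

End Cycle.

Lemma realisable_all_fin_gen (G : group) (n : nat) (c : configuration n) :
  fin_gen_group G -> (forall I, I != set0 -> c I = false) ->
  realisable (power_group G n) c.
Proof.
move=> G_fg c0; exists (fun _ _ => True); split=> [i|I I_neq0]; first by do !split.
rewrite c0 //; split=> // _; apply: (eq_fin_gen _).1 (fin_gen_power n G_fg) => y.
by split.
Qed.

Lemma realisable_single (G : group) (f : G -> G) (n : nat) (c : configuration n)
    (I0 : {set 'I_n}) :
  fin_gen_group G -> is_automorphism f -> ~ fin_gen (fixed_points f) ->
  I0 != set0 -> (forall I, I != set0 -> c I = (I == I0)) ->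
  realisable (power_group G n) c.
Proof.
move=> G_fg [f_hom [g fK gK]] Fix_nfg I0_neq0 c_I0.
pose p := @enum_val _ (mem I0).
pose H i : power_group G n -> Prop :=
  if i \in I0 then cycle_sub f p [pred t | p t == i] else fun y => y = gone _.
exists H; split=> [i|I I_neq0].
  by rewrite /H; case: ifP => _; [apply: cycle_sub_subgroup | apply: subgroup1].
rewrite c_I0 //; have [I_sub|/subsetPn [j jI jI0]] := boolP (I \subset I0); last first.
  split=> [_|_]; first by apply/negbTE; apply: contraNneq jI0 => <-.
  by apply: fin_gen_sub1 => y /(_ j jI); rewrite /H (negbTE jI0).
apply: (iff_trans (eq_fin_gen _ (Q := cycle_sub f p [pred t | p t \in I]))).
  move=> y; split=> [y_cyc t /= It | y_cyc i Ii].
    by have := y_cyc _ It; rewrite /H (subsetP I_sub _ It) => /(_ t (eqxx _)).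
  rewrite /H (subsetP I_sub _ Ii) => t /eqP pt_i.
  by apply: y_cyc; rewrite /= pt_i.
have -> : (I == I0) = ~~ [exists t, p t \notin I].
  rewrite eqEsubset I_sub negb_exists; apply/subsetP/forallP => [I0_sub t | pI i I0i].
    by rewrite negbK I0_sub ?enum_valP.
  by have := pI (enum_rank_in I0i i); rewrite negbK /p (enum_rankK_in I0i I0i).
have k_gt0 : 0 < #|I0| by rewrite card_gt0.
apply: (iff_trans (fin_gen_cycle_sub f_hom fK gK _ G_fg Fix_nfg k_gt0 enum_val_inj)).
by split=> [->|/negbFE].
Qed.

Theorem lemma2p5 (G : group) (f : G -> G) :
  fin_gen_group G -> is_automorphism f -> ~ fin_gen (fixed_points f) ->
  forall (n : nat), 1 <= n ->
  forall c : configuration n, ones_count c <= 1 ->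
  realisable (power_group G n) c.
Proof.
move=> G_fg f_aut Fix_nfg n _ c c_ones.
have [I0 /andP [I0_neq0 cI0]|no_ones] := pickP [pred I | (I != set0) && c I].
  apply: (realisable_single G_fg f_aut Fix_nfg I0_neq0) => I I_neq0.
  have [cI|ncI] := boolP (c I); last by apply/esym/negbTE; apply: contraNneq ncI => ->.
  by apply/esym/eqP; apply: (card_le1_eqP c_ones); rewrite inE ?I_neq0 ?I0_neq0.
apply: realisable_all_fin_gen => // I I_neq0.
by have := no_ones I; rewrite /= I_neq0.
Qed.
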